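(* Let $F$ be a finite forest each of whose connected components is a caterpillar with at least one edge. Then $F$ is odd-graceful.
   Context: A caterpillar is a tree with the property that removing all of its end vertices (leaves) leaves a path. A graph $G$ with $n$ edges is odd-graceful if there is an injective map $f:V(G)\to\{0,1,2,\dots,2n-1\}$ such that the set of induced edge weights $\{|f(x)-f(y)| : xy\in E(G)\}$ equals $\{1,3,5,\dots,2n-1\}$. *)

From mathcomp Require Import all_boot.
Set Implicit Arguments. Unset Strict Implicit. Unset Printing Implicit Defensive.

Definition simple_graph (V : finType) (e : rel V) : Prop :=
  symmetric e /\ irreflexive e.

Definition edges (V : finType) (e : rel V) : {set {set V}} :=
  [set [set p.1; p.2] | p : V * V & e p.1 p.2].

Definition degree (V : finType) (e : rel V) (x : V) : nat := #|[set y | e x y]|.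

Definition forest (V : finType) (e : rel V) : Prop :=
  forall s : seq V, uniq s -> 3 <= size s -> ~~ cycle e s.

Definition component (V : finType) (e : rel V) (v : V) : {set V} :=
  [set u | connect e v u].

(* The empty graph (k = 0) counts as a (trivial) path. *)
Definition induces_path (V : finType) (e : rel V) (S : {set V}) : Prop :=
  exists s : seq V, uniq s /\ S =i s /\
    forall x y, x \in S -> y \in S ->
      (e x y <-> exists2 i, i.+1 < size s &
         ((nth x s i = x /\ nth x s i.+1 = y) \/ (nth x s i = y /\ nth x s i.+1 = x))).

Definition caterpillar_component (V : finType) (e : rel V) (v : V) : Prop :=
  induces_path e [set u in component e v | degree e u != 1].

Definition has_edge_in (V : finType) (e : rel V) (C : {set V}) : Prop :=
  exists x y, x \in C /\ y \in C /\ e x y.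

Definition natdist (a b : nat) : nat := (a - b) + (b - a).

Definition odd_graceful (V : finType) (e : rel V) : Prop :=
  let n := #|edges e| in
  exists f : V -> nat,
    injective f /\ (forall x, f x < 2 * n) /\
    (forall w, (exists x y, e x y /\ w = natdist (f x) (f y)) <->
               (odd w /\ w < 2 * n)).

From mathcomp Require Import all_boot zify.
Set Implicit Arguments. Unset Strict Implicit. Unset Printing Implicit Defensive.

(* A caterpillar component is grown from one end of its spine by repeatedly
   attaching a pendant vertex at the current "head": the spine vertex s_0, its
   legs, s_1, its legs, and so on.  Along the way we keep a bipartition, with
   sides of sizes P and Q, and a numbering r of each side from 0 under which the
   edge sums r x + r y are 0, ..., P+Q-2, each exactly once.  The head carries
   the largest number P-1 of its side, so a new pendant vertex takes number Q on
   the other side and contributes the new sum P+Q-1.  Labelling one side by 2r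
   and the other by 2N-1-2r turns such a numbering into labels whose edge
   weights are the P+Q-1 largest odd numbers below 2N.  The other components,
   labelled by induction and shifted up by 2P-1, fit into the gap between the
   two sides and take the smaller odd weights. *)

Section SumGraceful.

Variables (V : finType) (e : rel V).
Hypotheses (e_sym : symmetric e) (e_irr : irreflexive e).

Definition same_edge (x y x' y' : V) : Prop :=
  (x = x' /\ y = y') \/ (x = y' /\ y = x').

Record sum_graceful (D : {set V}) (side : pred V) (r : V -> nat) (P Q : nat) : Prop :=
  SumGraceful {
    sum_graceful_bipartite : {in D &, forall x y, e x y -> side x != side y};
    sum_graceful_inj : {in D &, forall x y, side x = side y -> r x = r y -> x = y};
    sum_graceful_bound : {in D, forall x, r x < (if side x then P else Q)};
    sum_graceful_sum_bound : {in D &, forall x y, e x y -> r x + r y < P + Q - 1};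
    sum_graceful_sum_onto : forall j, j < P + Q - 1 ->
      exists x y, [/\ x \in D, y \in D, e x y & r x + r y = j];
    sum_graceful_sum_inj : forall x y x' y', x \in D -> y \in D -> x' \in D -> y' \in D ->
      e x y -> e x' y' -> r x + r y = r x' + r y' -> same_edge x y x' y'
  }.

Definition headed (D : {set V}) (h : V) : Prop :=
  exists side r P Q, [/\ sum_graceful D side r P Q, h \in D, side h & r h + 1 = P].

Lemma sum_graceful_swap D side r P Q :
  sum_graceful D side r P Q -> sum_graceful D (predC side) r Q P.
Proof.
case=> bip inj bnd sm onto sinj; split=> //=.
- by move=> x y xD yD /(bip x y xD yD); case: (side x); case: (side y).
- by move=> x y xD yD /negb_inj; apply: inj.
- by move=> x xD; rewrite if_neg; apply: bnd.
- by rewrite addnC.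
- by rewrite addnC.
Qed.

Lemma sum_graceful_attach D side r P Q h u :
  sum_graceful D side r P Q -> h \in D -> side h -> r h + 1 = P ->
  u \notin D -> e u h -> {in D, forall y, e u y -> y = h} ->
  sum_graceful (u |: D) [pred x | (x != u) && side x]
    (fun x => if x == u then Q else r x) P Q.+1.
Proof.
case=> bip inj bnd sm onto sinj hD sh rh uD euh uh.
have neq_u x : x \in D -> (x == u) = false.
  by move=> xD; apply: contraNF uD => /eqP<-.
have hu := neq_u h hD.
have edgeP x y : x \in u |: D -> y \in u |: D -> e x y ->
    [\/ x = u /\ y = h, x = h /\ y = u | x \in D /\ y \in D].
  rewrite !inE => /predU1P[->|xD] /predU1P[->|yD] exy.
  - by rewrite e_irr in exy.
  - by constructor 1; split=> //; apply: uh.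
  - by constructor 2; split=> //; apply: uh; rewrite // e_sym.
  - by constructor 3.
split=> /=.
- move=> x y xD yD exy.
  case: (edgeP x y xD yD exy) => [[-> ->]|[-> ->]|[{}xD {}yD]].
  + by rewrite eqxx hu sh.
  + by rewrite eqxx hu sh.
  + by rewrite !neq_u //=; apply: bip.
- move=> x y; rewrite !inE => /predU1P[->|xD] /predU1P[->|yD] //;
    rewrite ?eqxx ?neq_u //=.
  + by move=> syQ ry; have := bnd y yD; rewrite -syQ -ry ltnn.
  + by move=> sxQ rx; have := bnd x xD; rewrite sxQ rx ltnn.
  + exact: inj.
- move=> x; rewrite !inE => /predU1P[->|xD]; rewrite ?eqxx ?neq_u //=.
  by have := bnd x xD; case: (side x) => // /ltnW.
- move=> x y xD yD exy.
  case: (edgeP x y xD yD exy) => [[-> ->]|[-> ->]|[{}xD {}yD]];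
    rewrite ?eqxx ?hu ?neq_u //; try by clear -rh; lia.
  by have := sm x y xD yD exy; clear; lia.
- move=> j jlt; case: (ltnP j (P + Q - 1)) => jPQ.
    have [x [y [xD yD exy rj]]] := onto j jPQ.
    by exists x, y; rewrite !inE xD yD !neq_u ?orbT.
  exists h, u; rewrite !inE hD eqxx orbT hu e_sym euh; split=> //.
  by move: jlt jPQ; clear -rh; lia.
- move=> x y x' y' xD yD xD' yD' exy exy'.
  case: (edgeP x y xD yD exy) => [[-> ->]|[-> ->]|[{}xD {}yD]];
  case: (edgeP x' y' xD' yD' exy') => [[-> ->]|[-> ->]|[{}xD' {}yD']];
    rewrite ?eqxx ?hu ?neq_u //; try by [left | right].
  + by have := sm x' y' xD' yD' exy'; clear -rh; lia.
  + by have := sm x' y' xD' yD' exy'; clear -rh; lia.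
  + by have := sm x y xD yD exy; clear -rh; lia.
  + by have := sm x y xD yD exy; clear -rh; lia.
  + exact: sinj.
Qed.

Lemma headed_attach D h u :
  headed D h -> u \notin D -> e u h -> {in D, forall y, e u y -> y = h} ->
  headed (u |: D) h /\ headed (u |: D) u.
Proof.
case=> side [r [P [Q [sg hD sh rh]]]] uD euh uh.
have sg' := sum_graceful_attach sg hD sh rh uD euh uh.
have hu : (h == u) = false by apply: contraNF uD => /eqP<-.
split.
  by exists [pred x | (x != u) && side x], (fun x => if x == u then Q else r x), P, Q.+1;
    rewrite !inE hD orbT /= hu.
exists (predC [pred x | (x != u) && side x]), (fun x => if x == u then Q else r x), Q.+1, P.
by split; [exact: sum_graceful_swap | rewrite !inE eqxx | rewrite /= eqxx | rewrite eqxx addn1].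
Qed.

Lemma headed1 x : headed [set x] x.
Proof.
exists predT, (fun _ => 0), 1, 0; split; rewrite ?inE //.
split=> // [a b|a b|a b|a b a' b']; rewrite !inE => /eqP-> /eqP->; rewrite ?e_irr //.
Qed.

Lemma headed_pendants D h (L : {set V}) :
  headed D h -> {in L, forall u, u \notin D /\ forall y, e u y = (y == h)} ->
  headed (D :|: L) h.
Proof.
move=> hDh pendL; rewrite -[L]set_enum.
have : {subset enum L <= L} by move=> x; rewrite mem_enum.
elim: (enum L) (enum_uniq L) => [|u l IHl] /=; first by rewrite set_nil setU0.
case/andP=> ul ul_uniq lL; have [uD uh] := pendL u (lL u (mem_head _ _)).
rewrite set_cons setUCA.
have uDl : u \notin D :|: [set:: l] by rewrite !inE negb_or uD.
have IH : headed (D :|: [set:: l]) h.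
  by apply: IHl => // y yl; apply: lL; rewrite inE yl orbT.
have [] // := headed_attach IH uDl; first by rewrite uh.
by move=> y _; rewrite uh => /eqP.
Qed.

End SumGraceful.

Section Caterpillar.

Variables (V : finType) (e : rel V).
Hypotheses (e_sym : symmetric e) (e_irr : irreflexive e).

Lemma induces_path_adj (S : {set V}) (s : seq V) :
  uniq s -> S =i s ->
  (forall x y, x \in S -> y \in S ->
    (e x y <-> exists2 i, i.+1 < size s &
       ((nth x s i = x /\ nth x s i.+1 = y) \/ (nth x s i = y /\ nth x s i.+1 = x)))) ->
  {in S &, forall x y,
    e x y = ((index x s).+1 == index y s) || ((index y s).+1 == index x s)}.
Proof.
move=> s_uniq Ss adj x y xS yS; have := adj x y xS yS.
rewrite !Ss in xS yS; case=> adj1 adj2; apply/idP/idP.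
  case/adj1=> i lt_is [[<- <-]|[<- <-]]; rewrite !index_uniq ?eqxx ?orbT //; exact: ltnW.
have nth_x j : j = index x s -> nth x s j = x by move->; rewrite nth_index.
have nth_y j : j = index y s -> nth x s j = y by move->; rewrite nth_index.
case/orP=> /eqP ixy; apply: adj2.
  by exists (index x s); rewrite ?ixy ?index_mem //; left; split; [apply: nth_x | apply: nth_y].
by exists (index y s); rewrite ?ixy ?index_mem //; right; split; [apply: nth_y | apply: nth_x].
Qed.

Lemma component_eq v x : x \in component e v -> component e x = component e v.
Proof.
rewrite in_set => vx; apply/setP=> y; rewrite !in_set.
by apply/idP/idP; [apply: connect_trans | rewrite (sym_connect_sym e_sym) in vx; apply: connect_trans].
Qed.

Lemma component_closed v : closed e (component e v).
Proof. by move=> x y exy; rewrite !in_set; apply: (connect_closed (sym_connect_sym e_sym)). Qed.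

Lemma degree1P x : degree e x = 1 -> exists w, forall y, e x y = (y == w).
Proof. by move/eqP/cards1P=> -[w /setP xw]; exists w => y; have := xw y; rewrite !inE. Qed.

Lemma degree1_edge_component x y : degree e x = 1 -> degree e y = 1 -> e x y ->
  component e x = [set x; y].
Proof.
move=> /degree1P[w xw] /degree1P[w' yw] exy.
have yx : e y x by rewrite e_sym.
move: (exy) (yx); rewrite xw yw => /eqP ? /eqP ?; subst w w'.
have closed_xy : closed e (mem [set x; y]).
  suff sub a b : e a b -> a \in [set x; y] -> b \in [set x; y].
    by move=> a b ab; apply/idP/idP; apply: sub; rewrite // e_sym.
  by move=> ab; rewrite !inE => /orP[]/eqP ?; subst a; move: ab; rewrite ?xw ?yw => ->; rewrite ?orbT.
apply/setP=> z; rewrite in_set; apply/idP/idP => [xz|].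
  by rewrite -(closed_connect closed_xy xz) !inE eqxx.
by rewrite !inE => /orP[]/eqP->; [exact: connect0 | exact: connect1].
Qed.

Section Spine.

Variables (C : {set V}) (a : V) (s : seq V).
Let sp := a :: s.
Hypotheses (sp_uniq : uniq sp) (sp_sub : {subset sp <= C}).
Hypothesis sp_adj : {in sp &, forall x y,
  e x y = ((index x sp).+1 == index y sp) || ((index y sp).+1 == index x sp)}.
Hypothesis legs : {in C, forall x, x \notin sp ->
  exists2 w, w \in sp & forall y, e x y = (y == w)}.

(* [level] encodes the growth order s_0, legs of s_0, s_1, legs of s_1, ...;
   the [anchor] of a leg is its spine neighbour. *)
Let anchor x := odflt x [pick w | e x w].
Let level x := if x \in sp then (index x sp).*2 else (index (anchor x) sp).*2.+1.
Let D k := [set x in C | level x < k].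

Lemma leg_anchor x : x \in C -> x \notin sp ->
  anchor x \in sp /\ forall y, e x y = (y == anchor x).
Proof.
move=> xC xsp; have [w wsp xw] := legs xC xsp.
rewrite /anchor; case: pickP => [y|/(_ w)]; rewrite xw ?eqxx // => /eqP->.
by split=> //=.
Qed.

Lemma level_succ k : D k.+1 = D k :|: [set x in C | level x == k].
Proof. by apply/setP=> x; rewrite !in_setU !in_set ltnS leq_eqVlt orbC andb_orr. Qed.

Lemma level_spine i : i < size sp -> level (nth a sp i) = i.*2.
Proof. by move=> isp; rewrite /level mem_nth // index_uniq. Qed.

Lemma level1 : D 1 = [set a].
Proof.
apply/setP=> x; rewrite /D in_set in_set1; apply/andP/eqP => [[xC]|->].
  by rewrite /level; case: ifP => // _ /=; case: eqP.
by rewrite sp_sub ?mem_head // /level mem_head /= eqxx.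
Qed.

Lemma level_legs i : {in [set x in C | level x == i.*2.+1], forall u,
  u \notin D i.*2.+1 /\ forall y, e u y = (y == nth a sp i)}.
Proof.
move=> u; rewrite in_set => /andP[uC /eqP lvu].
rewrite in_set lvu ltnn andbF; split=> //.
have usp : u \notin sp.
  by apply/negP => usp; move/(congr1 odd): lvu; rewrite /level usp /= !odd_double.
have [asp uw] := leg_anchor uC usp.
suff <- : anchor u = nth a sp i by [].
by move: lvu; rewrite /level (negbTE usp) => -[/double_inj <-]; rewrite nth_index.
Qed.

Lemma level_spine_succ i : i.+1 < size sp ->
  D i.*2.+3 = nth a sp i.+1 |: D i.*2.+2.
Proof.
move=> isp; rewrite level_succ setUC; congr (_ :|: _); apply/setP=> x.
rewrite in_set in_set1; apply/andP/eqP => [[xC /eqP lvx]|->]; last first.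
  by rewrite sp_sub ?mem_nth // level_spine.
have xsp : x \in sp.
  by apply/negPn/negP => xsp; move/(congr1 odd): lvx; rewrite /level (negbTE xsp) /= !odd_double.
by move: lvx; rewrite /level xsp -doubleS => /double_inj <-; rewrite nth_index.
Qed.

Lemma spine_succ_adj i : i.+1 < size sp ->
  {in D i.*2.+2, forall y, e (nth a sp i.+1) y -> y = nth a sp i}.
Proof.
move=> isp y; rewrite in_set => /andP[yC lvy] ey.
have isp' : nth a sp i.+1 \in sp by rewrite mem_nth.
case: (boolP (y \in sp)) => ysp.
  move: ey lvy; rewrite sp_adj // /level ysp index_uniq // ltnS leq_Sdouble.
  by move=> /orP[/eqP<-|/eqP[iy]]; [lia | rewrite -iy nth_index].
have [_ yw] := leg_anchor yC ysp.
move: ey lvy; rewrite e_sym yw /level (negbTE ysp) => /eqP<-.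
by rewrite index_uniq // doubleS; lia.
Qed.

Lemma headed_level i : i < size sp -> headed e (D i.*2.+2) (nth a sp i).
Proof.
elim: i => [_|i IHi isp].
  rewrite level_succ; apply: headed_pendants => //; last exact: level_legs 0.
  by rewrite level1; apply: headed1.
rewrite level_succ; apply: headed_pendants => //; last exact: level_legs i.+1.
rewrite level_spine_succ //.
have fresh : nth a sp i.+1 \notin D i.*2.+2 by rewrite in_set level_spine // ltnn andbF.
have adj : e (nth a sp i.+1) (nth a sp i).
  by rewrite sp_adj ?mem_nth ?index_uniq ?eqxx ?orbT //; exact: ltnW.
exact: (headed_attach e_sym e_irr (IHi (ltnW isp)) fresh adj (spine_succ_adj isp)).2.
Qed.

Lemma spine_headed : headed e C (last a s).
Proof.
have -> : last a s = nth a sp (size s) by rewrite (nth_last a sp).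
suff <- : D (size s).*2.+2 = C by exact: headed_level.
apply/setP=> x; rewrite in_set andb_idr // => xC; rewrite /level -doubleS.
case: ifP => [xsp|/negbT xsp]; rewrite ?ltn_double ?ltn_Sdouble -[(size s).+1]/(size sp) index_mem //.
by case: (leg_anchor xC xsp).
Qed.

End Spine.

Lemma caterpillar_headed v :
  caterpillar_component e v -> has_edge_in e (component e v) ->
  exists h, headed e (component e v) h.
Proof.
case=> t [t_uniq [Tt adj]] [x0 [y0 [x0C [y0C e0]]]].
have {adj} adjT := induces_path_adj t_uniq Tt adj.
set C := component e v in Tt adjT x0C y0C *.
have tC x : x \in t -> x \in C by rewrite -Tt in_set => /andP[].
have leg_deg x : x \in C -> x \notin t -> degree e x = 1.
  by move=> xC; rewrite -Tt in_set xC negbK => /eqP.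
case: t => [|a s] in t_uniq Tt adjT tC leg_deg *.
  exists y0; rewrite /C -(component_eq x0C) (degree1_edge_component _ _ e0) ?leg_deg //.
  have x0y0 : y0 \notin [set x0] by rewrite in_set1; apply: contraTneq e0 => ->; rewrite e_irr.
  have y0x0 : e y0 x0 by rewrite e_sym.
  have only_x0 : {in [set x0], forall y, e y0 y -> y = x0} by move=> y /set1P.
  by rewrite setUC; case: (headed_attach e_sym e_irr (headed1 e_irr x0) x0y0 y0x0 only_x0).
exists (last a s); apply: spine_headed => //.
- by move=> x y xt yt; apply: adjT; rewrite Tt.
move=> x xC xt; have [w xw] := degree1P (leg_deg x xC xt); exists w => //.
apply/negPn/negP => wt.
have wC : w \in C by rewrite -(component_closed v (_ : e x w)) ?xw.
have := tC a (mem_head a s).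
rewrite /C -(component_eq xC) (@degree1_edge_component x w) ?leg_deg ?xw //.
by rewrite !inE => /orP[]/eqP ax; [move: xt | move: wt]; rewrite -ax mem_head.
Qed.

End Caterpillar.

Lemma natdistC a b : natdist a b = natdist b a.
Proof. by rewrite /natdist addnC. Qed.

Lemma natdistDr a b c : natdist (a + c) (b + c) = natdist a b.
Proof. rewrite /natdist; lia. Qed.

Section OddGraceful.

Variables (V : finType) (e : rel V).

Record odd_graceful_on (S : {set V}) (f : V -> nat) (M : nat) : Prop := OddGracefulOn {
  odd_graceful_inj : {in S &, injective f};
  odd_graceful_bound : {in S, forall x, f x < 2 * M};
  odd_graceful_weight : {in S &, forall x y, e x y ->
    exists2 k, k < M & natdist (f x) (f y) = 2 * k + 1};
  odd_graceful_weight_onto : forall k, k < M ->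
    exists x y, [/\ x \in S, y \in S, e x y & natdist (f x) (f y) = 2 * k + 1];
  odd_graceful_weight_inj : forall x y x' y', x \in S -> y \in S -> x' \in S -> y' \in S ->
    e x y -> e x' y' -> natdist (f x) (f y) = natdist (f x') (f y') -> same_edge x y x' y'
}.

Lemma odd_graceful_on0 : odd_graceful_on set0 (fun _ => 0) 0.
Proof. by split=> // [x y|x|x y|x y x' y']; rewrite inE. Qed.

Section Union.

Variables (C S : {set V}) (side : pred V) (r : V -> nat) (P Q : nat) (f : V -> nat) (M : nat).
Hypotheses (sgC : sum_graceful e C side r P Q) (P_gt0 : 0 < P) (Q_gt0 : 0 < Q).
Hypotheses (CS_disj : [disjoint C & S]) (C_closed : closed e C).
Hypothesis ogS : odd_graceful_on S f M.

Let N := M + (P + Q - 1).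
Let g x := if x \in C then (if side x then 2 * r x else 2 * N - 1 - 2 * r x)
           else f x + (2 * P - 1).

Lemma union_edge x y : x \in C :|: S -> y \in C :|: S -> e x y ->
  (x \in C /\ y \in C) \/ (x \in S /\ y \in S).
Proof.
have notC z : z \in S -> z \notin C by move=> zS; rewrite (disjointFl CS_disj).
rewrite !in_setU => /orP[xC|xS] /orP[yC|yS] exy; [left | | | right] => //.
  by move: (notC y yS); rewrite -(C_closed exy) xC.
by move: (notC x xS); rewrite (C_closed exy) yC.
Qed.

Lemma union_labelC x : x \in C ->
  g x = if side x then 2 * r x else 2 * N - 1 - 2 * r x.
Proof. by rewrite /g => ->. Qed.

Lemma union_labelS x : x \in S -> g x = f x + (2 * P - 1).
Proof. by move=> xS; rewrite /g (disjointFl CS_disj). Qed.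

Lemma union_weightC x y : x \in C -> y \in C -> e x y ->
  natdist (g x) (g y) = 2 * (N - 1 - (r x + r y)) + 1 /\ M <= N - 1 - (r x + r y) < N.
Proof.
move=> xC yC exy; have := sum_graceful_bipartite sgC xC yC exy.
have := sum_graceful_sum_bound sgC xC yC exy.
have := sum_graceful_bound sgC xC; have := sum_graceful_bound sgC yC.
rewrite /natdist !union_labelC //.
by case: (side x); case: (side y) => //= *; lia.
Qed.

Lemma union_weightS x y : x \in S -> y \in S -> natdist (g x) (g y) = natdist (f x) (f y).
Proof. by move=> xS yS; rewrite !union_labelS // natdistDr. Qed.

Lemma union_label_inj : {in C :|: S &, injective g}.
Proof.
have bnd := sum_graceful_bound sgC; have f_bnd := odd_graceful_bound ogS.
move=> x y /setUP[xC|xS] /setUP[yC|yS].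
- rewrite !union_labelC //; have := bnd x xC; have := bnd y yC.
  case sx: (side x); case sy: (side y) => *; try lia;
    by apply: (sum_graceful_inj sgC); rewrite ?sx ?sy //; lia.
- rewrite union_labelC // union_labelS //.
  by have := bnd x xC; have := f_bnd y yS; case: (side x); lia.
- rewrite union_labelS // union_labelC //.
  by have := bnd y yC; have := f_bnd x xS; case: (side y); lia.
- by rewrite !union_labelS // => /addIn; apply: (odd_graceful_inj ogS).
Qed.

Lemma union_label_bound : {in C :|: S, forall x, g x < 2 * N}.
Proof.
move=> x /setUP[xC|xS].
  by rewrite union_labelC //; have := sum_graceful_bound sgC xC; case: (side x); lia.
by rewrite union_labelS //; have := odd_graceful_bound ogS xS; lia.
Qed.

Lemma union_weight : {in C :|: S &, forall x y, e x y ->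
  exists2 k, k < N & natdist (g x) (g y) = 2 * k + 1}.
Proof.
move=> x y xCS yCS exy; case: (union_edge xCS yCS exy) => [[xC yC]|[xS yS]].
  by have [-> /andP[_ ltN]] := union_weightC xC yC exy; exists (N - 1 - (r x + r y)).
rewrite union_weightS //; have [k kM ->] := odd_graceful_weight ogS xS yS exy.
by exists k => //; apply: ltn_addr.
Qed.

Lemma union_weight_onto k : k < N ->
  exists x y, [/\ x \in C :|: S, y \in C :|: S, e x y & natdist (g x) (g y) = 2 * k + 1].
Proof.
move=> kN; case: (ltnP k M) => kM.
  have [x [y [xS yS exy wk]]] := odd_graceful_weight_onto ogS kM.
  by exists x, y; rewrite !in_setU xS yS !orbT union_weightS.
have jPQ : N - 1 - k < P + Q - 1 by lia.
have [x [y [xC yC exy rxy]]] := sum_graceful_sum_onto sgC jPQ.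
exists x, y; rewrite !in_setU xC yC; split=> //.
by have [-> _] := union_weightC xC yC exy; rewrite rxy; congr (_ + _); lia.
Qed.

Lemma union_weight_inj x y x' y' : x \in C :|: S -> y \in C :|: S ->
  x' \in C :|: S -> y' \in C :|: S -> e x y -> e x' y' ->
  natdist (g x) (g y) = natdist (g x') (g y') -> same_edge x y x' y'.
Proof.
move=> xCS yCS xCS' yCS' exy exy'.
case: (union_edge xCS yCS exy) => [[xC yC]|[xS yS]];
case: (union_edge xCS' yCS' exy') => [[xC' yC']|[xS' yS']].
- have [-> _] := union_weightC xC yC exy; have [-> _] := union_weightC xC' yC' exy'.
  have lt := sum_graceful_sum_bound sgC xC yC exy.
  have lt' := sum_graceful_sum_bound sgC xC' yC' exy'.
  move=> /addIn/eqP; rewrite eqn_pmul2l // /N => /eqP eq_w.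
  by apply: (sum_graceful_sum_inj sgC) => //; clear -lt lt' eq_w; lia.
- have [-> /andP[lbM _]] := union_weightC xC yC exy.
  rewrite union_weightS //; have [k kM ->] := odd_graceful_weight ogS xS' yS' exy'.
  by move=> /addIn/eqP; rewrite eqn_pmul2l // => /eqP eq_w; move: lbM; rewrite eq_w leqNgt kM.
- have [-> /andP[lbM _]] := union_weightC xC' yC' exy'.
  rewrite union_weightS //; have [k kM ->] := odd_graceful_weight ogS xS yS exy.
  by move=> /addIn/eqP; rewrite eqn_pmul2l // => /eqP eq_w; move: lbM; rewrite -eq_w leqNgt kM.
- by rewrite !union_weightS //; apply: (odd_graceful_weight_inj ogS).
Qed.

Lemma odd_graceful_on_union : exists g, odd_graceful_on (C :|: S) g N.
Proof.
exists g; split; [exact: union_label_inj | exact: union_label_bound | exact: union_weight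
  | exact: union_weight_onto | exact: union_weight_inj].
Qed.

End Union.

End OddGraceful.

Section EdgeCount.

Variables (V : finType) (e : rel V) (f : V -> nat) (M : nat).
Hypotheses (e_irr : irreflexive e) (og : odd_graceful_on e [set: V] f M).

Lemma set2_same_edge (x y x' y' : V) :
  x != y -> [set x; y] = [set x'; y'] -> same_edge x y x' y'.
Proof.
move=> xy xy_eq.
have : x \in [set x'; y'] by rewrite -xy_eq !inE eqxx.
have : y \in [set x'; y'] by rewrite -xy_eq !inE eqxx orbT.
rewrite !inE => /orP[]/eqP ey /orP[]/eqP ex; subst x y; rewrite ?eqxx // in xy;
  by [left | right].
Qed.

Let edge_of (k : 'I_M) : {set V} :=
  if [pick p : V * V | e p.1 p.2 && (natdist (f p.1) (f p.2) == 2 * k + 1)] is Some p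
  then [set p.1; p.2] else set0.

Lemma edge_ofP (k : 'I_M) : exists x y,
  [/\ e x y, natdist (f x) (f y) = 2 * k + 1 & edge_of k = [set x; y]].
Proof.
rewrite /edge_of; case: pickP => [[x y] /andP[/= exy /eqP wxy]|none]; first by exists x, y.
have [x [y [_ _ exy wxy]]] := odd_graceful_weight_onto og (ltn_ord k).
by move: (none (x, y)); rewrite /= exy wxy eqxx.
Qed.

Lemma card_edges_odd_graceful : #|edges e| = M.
Proof.
have edgesE : edges e = [set edge_of k | k : 'I_M].
  apply/setP=> E; apply/imsetP/imsetP => [[[x y] exy ->]|[k _ ->]]; last first.
    by have [x [y [exy _ ->]]] := edge_ofP k; exists (x, y); rewrite ?inE.
  rewrite inE /= in exy.
  have [k kM wxy] := odd_graceful_weight og (in_setT x) (in_setT y) exy.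
  have [x' [y' [exy' wxy' Ek]]] := edge_ofP (Ordinal kM).
  exists (Ordinal kM) => //; rewrite Ek.
  have [[-> ->]|[-> ->]] := odd_graceful_weight_inj og (in_setT x) (in_setT y)
    (in_setT x') (in_setT y') exy exy' (etrans wxy (esym wxy')) => //.
  by rewrite setUC.
rewrite edgesE card_imset ?card_ord // => k k' eqE.
have [x [y [exy wxy Ek]]] := edge_ofP k; have [x' [y' [exy' wxy' Ek']]] := edge_ofP k'.
have xy : x != y by apply: contraTneq exy => ->; rewrite e_irr.
suff : 2 * k + 1 = 2 * k' + 1 by move=> ?; apply: ord_inj; lia.
rewrite -wxy -wxy'.
by move: eqE; rewrite Ek Ek' => /(set2_same_edge xy)[[-> ->]|[-> ->]] //; rewrite natdistC.
Qed.

End EdgeCount.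

Section CaterpillarForest.

Variables (V : finType) (e : rel V).
Hypotheses (e_sym : symmetric e) (e_irr : irreflexive e).
Hypothesis caterpillars : forall v, caterpillar_component e v /\ has_edge_in e (component e v).

Lemma component_sub v (S : {set V}) :
  v \in S -> closed e S -> component e v \subset S.
Proof.
move=> vS S_closed; apply/subsetP=> x; rewrite in_set => vx.
by rewrite -(closed_connect S_closed vx).
Qed.

Lemma odd_graceful_on_closed (S : {set V}) :
  closed e S -> exists f M, odd_graceful_on e S f M.
Proof.
elim: {S}_.+1 {-2}S (ltnSn #|S|) => // n IHn S leSn S_closed.
have [->|[v vS]] := set_0Vmem S; first by exists (fun _ => 0), 0; exact: odd_graceful_on0.
have [catv edgev] := caterpillars v.
have [h [side [r [P [Q [sg hC sh rh]]]]]] := caterpillar_headed e_sym e_irr catv edgev.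
have CS := component_sub vS S_closed.
have vC : v \in component e v by rewrite in_set connect0.
have C_closed := component_closed e_sym v.
move: (component e v) sg edgev CS vC C_closed => C sg [x0 [y0 [x0C [y0C e0]]]] CS vC C_closed.
have P_gt0 : 0 < P by rewrite -rh addn1.
have Q_gt0 : 0 < Q.
  have [z zC /negbTE sz] : exists2 z, z \in C & ~~ side z.
    have := sum_graceful_bipartite sg x0C y0C e0.
    by case sx: (side x0) => /= sy; [exists y0 | exists x0; rewrite ?sx].
  by have := sum_graceful_bound sg zC; rewrite sz; apply: leq_ltn_trans.
have disjC : [disjoint C & S :\: C].
  by rewrite -setI_eq0; apply/eqP/setP=> x; rewrite !inE; case: (x \in C).
have rest_closed : closed e (S :\: C).
  by move=> x y exy; rewrite !inE (S_closed x y exy) (C_closed x y exy).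
have [f [M og]] : exists f M, odd_graceful_on e (S :\: C) f M.
  apply: IHn rest_closed; rewrite cardsDS //.
  have C_gt0 : 0 < #|C| by apply/card_gt0P; exists v.
  by have := subset_leq_card CS; clear -leSn C_gt0; lia.
have [g og'] := odd_graceful_on_union sg P_gt0 Q_gt0 disjC C_closed og.
exists g, (M + (P + Q - 1)); congr odd_graceful_on: og'.
by apply/setP=> x; rewrite !inE; case: (boolP (x \in C)) => // /(subsetP CS).
Qed.

End CaterpillarForest.

Theorem theorem2 (V : finType) (e : rel V) :
  simple_graph e ->
  forest e ->
  (forall v : V, caterpillar_component e v /\ has_edge_in e (component e v)) ->
  odd_graceful e.
Proof.
move=> [e_sym e_irr] _ caterpillars.
have setT_closed : closed e [set: V] by move=> x y _; rewrite !inE.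
have [f [M og]] := odd_graceful_on_closed e_sym e_irr caterpillars setT_closed.
rewrite /odd_graceful (card_edges_odd_graceful e_irr og); exists f; split; [|split].
- by move=> x y; apply: (odd_graceful_inj og); rewrite inE.
- by move=> x; apply: (odd_graceful_bound og); rewrite inE.
move=> w; split=> [[x [y [exy ->]]]|[odd_w ltw]].
  have [k kM ->] := odd_graceful_weight og (in_setT x) (in_setT y) exy.
  by rewrite addn1 /= oddM andFb; split=> //; lia.
have wE : w = 2 * w./2 + 1 by rewrite -{1}(odd_double_half w) odd_w add1n -muln2 mulnC addn1.
have half_lt : w./2 < M by move: ltw; rewrite {1}wE; lia.
have [x [y [_ _ exy wxy]]] := odd_graceful_weight_onto og half_lt.
by exists x, y; rewrite wxy -wE.
Qed.
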